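(* Let $[S,T]$ be a Tamari interval of binary trees with $n$ nodes, and define $u_i$ as the number of nodes in the right subtree of node $i$ in $S$ ($i\in[n]$) and $v_j$ as the number of nodes in the left subtree of node $j$ in $T$ ($j\in[n]$). Then the following are equivalent: (a) for every $i\in[n-1]$, $u_i\neq 0$ or $v_{i+1}\neq 0$; (b) $S$ and $T$ have the same canopy.
   Context: Nodes of a binary tree with $n$ nodes are labeled $1,\dots,n$ in in-order. A right rotation replaces a subtree $((A,x,B),y,C)$ by $(A,x,(B,y,C))$; $S\leq_{\mathrm t}T$ (Tamari order) iff $T$ is obtained from $S$ by a sequence of right rotations, and a Tamari interval is a pair $[S,T]$ with $S\leq_{\mathrm t}T$. For each $i\in[n-1]$, exactly one of the following holds in a binary tree: node $i$ has empty right subtree, or node $i+1$ has empty left subtree; the canopy of the tree is the word $w\in\{R,L\}^{n-1}$ with $w_i=R$ in the first case and $w_i=L$ in the second. The pair $(u,v)$ in the claim is exactly the Tamari interval diagram associated with $[S,T]$ (via the Châtel–Pons interval-poset bijection), and condition (a) is the definition of a synchronized Tamari interval diagram; $[S,T]$ is called synchronized when (b) holds. *)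

From mathcomp Require Import all_boot.
Set Implicit Arguments. Unset Strict Implicit. Unset Printing Implicit Defensive.

(* Binary trees (unlabeled); nodes are labeled 1..n in in-order. *)
Inductive btree : Type := Leaf | Node of btree & btree.

Fixpoint bt_size (t : btree) : nat :=
  match t with Leaf => 0 | Node l r => (bt_size l + bt_size r).+1 end.

(* In-order list of the nodes, each recorded as
   (number of nodes of its left subtree, number of nodes of its right subtree).
   Entry k (0-indexed) corresponds to node k+1. *)
Fixpoint inorder_sizes (t : btree) : seq (nat * nat) :=
  match t with
  | Leaf => [::]
  | Node l r => inorder_sizes l ++ (bt_size l, bt_size r) :: inorder_sizes r
  end.

Definition left_size (t : btree) (i : nat) : nat := (nth (0, 0) (inorder_sizes t) i.-1).1.
Definition right_size (t : btree) (i : nat) : nat := (nth (0, 0) (inorder_sizes t) i.-1).2.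

Inductive right_rot : btree -> btree -> Prop :=
  | rot_root A B C : right_rot (Node (Node A B) C) (Node A (Node B C))
  | rot_left l l' r : right_rot l l' -> right_rot (Node l r) (Node l' r)
  | rot_right l r r' : right_rot r r' -> right_rot (Node l r) (Node l r').

Inductive tamari_le : btree -> btree -> Prop :=
  | tamari_refl t : tamari_le t t
  | tamari_step s t u : right_rot s t -> tamari_le t u -> tamari_le s u.

Inductive RL := R | L.

Definition canopy (t : btree) : seq RL :=
  [seq (if right_size t i == 0 then R else L) | i <- iota 1 (bt_size t).-1].

From mathcomp Require Import all_boot zify.

(* The canopy letter of node i is R iff node i has an empty right subtree, and
   (in any tree) that happens iff node i+1 has a nonempty left subtree.  So
   condition (a) says: if node i of S has an empty right subtree, so does node i
   of T.  A right rotation only enlarges right subtrees (the rotated node gains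
   one, every other node keeps its subtree sizes), so the right subtree of node
   i in S is never larger than in T, which gives the converse implication; (a)
   is therefore exactly the equality of the two canopies. *)

Set Implicit Arguments.
Unset Strict Implicit.
Unset Printing Implicit Defensive.

Lemma size_inorder_sizes t : size (inorder_sizes t) = bt_size t.
Proof. by elim: t => //= l IHl r IHr; rewrite size_cat /= IHl IHr addnS. Qed.

Lemma nth_inorder_sizes_Node l r k :
  nth (0, 0) (inorder_sizes (Node l r)) k =
  if k < bt_size l then nth (0, 0) (inorder_sizes l) k
  else if k == bt_size l then (bt_size l, bt_size r)
  else nth (0, 0) (inorder_sizes r) (k - (bt_size l).+1).
Proof.
rewrite /= nth_cat size_inorder_sizes.
by case: ltngtP => [//|lt_lk|->]; rewrite ?subnn // -(subnSK lt_lk).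
Qed.

Lemma left_size_Node l r i :
  left_size (Node l r) i.+1 =
  if i < bt_size l then left_size l i.+1
  else if i == bt_size l then bt_size l else left_size r (i - bt_size l).
Proof.
by rewrite /left_size /= nth_inorder_sizes_Node subnS; case: ifP => //; case: ifP.
Qed.

Lemma right_size_Node l r i :
  right_size (Node l r) i.+1 =
  if i < bt_size l then right_size l i.+1
  else if i == bt_size l then bt_size r else right_size r (i - bt_size l).
Proof.
by rewrite /right_size /= nth_inorder_sizes_Node subnS; case: ifP => //; case: ifP.
Qed.

Lemma left_size_first t : left_size t 1 = 0.
Proof. by elim: t => //= l IHl r _; rewrite left_size_Node; case: posnP => [->|]. Qed.

Lemma right_size_last t : right_size t (bt_size t) = 0.
Proof.
elim: t => //= l _ r IHr; rewrite right_size_Node ltnNge leq_addr addKn /=.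
by case: ifP => // /eqP; rewrite -{2}[bt_size l]addn0 => /addnI.
Qed.

Lemma right_size_eq0 t i :
  0 < i < bt_size t -> (right_size t i == 0) = (left_size t i.+1 != 0).
Proof.
case: i => // i /= lt_it; elim: t i lt_it => //= l IHl r IHr i lt_it.
rewrite right_size_Node left_size_Node.
case: (ltngtP i.+1 (bt_size l)) => [lt_il | lt_li | eq_il].
- exact: IHl.
- case: (eqVneq i (bt_size l)) => [eq_il | ne_il].
    rewrite eq_il subSnn left_size_first /=; apply/eqP; lia.
  have -> : i - bt_size l = (i - (bt_size l).+1).+1 by lia.
  have -> : i.+1 - bt_size l = (i - (bt_size l).+1).+2 by lia.
  by rewrite IHr //; lia.
- by rewrite eq_il right_size_last -eq_il.
Qed.

Lemma right_rot_size s t : right_rot s t -> bt_size s = bt_size t.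
Proof. by elim=> /= *; lia. Qed.

Lemma tamari_le_size s t : tamari_le s t -> bt_size s = bt_size t.
Proof. by elim=> // s' t' u /right_rot_size ->. Qed.

Lemma right_rot_right_size s t :
  right_rot s t -> forall i, right_size s i <= right_size t i.
Proof.
rewrite /right_size => st i; elim: st i.-1 => [A B C | l l' r st IH | l r r' st IH] k.
- rewrite !nth_inorder_sizes_Node /= -subnDA addSn addnS.
  by do ![case: ifP => ? /=]; lia.
- rewrite !nth_inorder_sizes_Node (right_rot_size st).
  by case: ifP => _; [exact: IH | case: ifP].
- rewrite !nth_inorder_sizes_Node (right_rot_size st).
  by case: ifP => // _; case: ifP => // _; exact: IH.
Qed.

Lemma tamari_le_right_size s t :
  tamari_le s t -> forall i, right_size s i <= right_size t i.
Proof.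
elim=> // s' t' u /right_rot_right_size le_st' _ le_t'u i.
exact: leq_trans (le_t'u i).
Qed.

Lemma canopy_eq s t :
  bt_size s = bt_size t ->
  canopy s = canopy t <->
  forall i, 0 < i < bt_size s -> (right_size s i == 0) = (right_size t i == 0).
Proof.
move=> eq_st; rewrite /canopy -eq_st -eq_in_map; split=> eq_rs i.
- move=> range_i; have /eq_rs : i \in iota 1 (bt_size s).-1 by rewrite mem_iota; lia.
  by case: eqP; case: eqP.
- by rewrite mem_iota => range_i; rewrite eq_rs //; lia.
Qed.

Theorem proposition2p5 (n : nat) (S T : btree) :
  bt_size S = n -> bt_size T = n -> tamari_le S T ->
  ((forall i, 1 <= i <= n - 1 ->
      right_size S i != 0 \/ left_size T i.+1 != 0)
   <-> canopy S = canopy T).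
Proof.
move=> <- size_T le_ST; rewrite canopy_eq ?size_T //.
have cond_iff_same_letter i : 0 < i < bt_size S ->
    right_size S i != 0 \/ left_size T i.+1 != 0 <->
    (right_size S i == 0) = (right_size T i == 0).
  move=> range_i; rewrite -right_size_eq0 ?size_T //.
  move: (tamari_le_right_size le_ST i).
  case: (right_size S i) => [|a]; case: (right_size T i) => [|b];
    split=> //; by [right | case | left].
split=> cond i range_i.
- by apply: (cond_iff_same_letter i range_i).1; apply: cond; lia.
- by apply: (cond_iff_same_letter i _).2; [lia | apply: cond; lia].
Qed.
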